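(* There is an absolute constant $K$ such that the following holds. Let $n \ge 1$ and $0 \le c < n$ be integers, and let $(h(i))_{i \ge 0}$ be a Fibonacci-automatic sequence generated by a Fibonacci-DFAO with $m$ states. Then there is a Fibonacci-DFAO with at most $K m^2 n^4$ states generating the linear subsequence $(h(ni+c))_{i \ge 0}$.
   Context: Fibonacci numbers $F_0=0,F_1=1,F_k=F_{k-1}+F_{k-2}$; for a binary word $x=x_1\cdots x_\ell$, $[x]=\sum_j x_j F_{\ell-j+2}$; a valid Fibonacci representation is a binary word with no factor $11$ (leading zeros allowed). A Fibonacci-DFAO is a deterministic finite automaton with output $(Q,\{0,1\},\delta,q_0,\Delta,\tau)$ (partial $\delta$ allowed) reading valid Fibonacci representations most significant digit first, with output independent of leading zeros; it generates $(h(i))_{i\ge0}$ if $h(i)=\tau(\delta(q_0,x))$ for every valid $x$ with $[x]=i$. A sequence is Fibonacci-automatic if some Fibonacci-DFAO generates it. *)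

From mathcomp Require Import all_boot.
Set Implicit Arguments. Unset Strict Implicit. Unset Printing Implicit Defensive.

Fixpoint fib (k : nat) : nat :=
  match k with
  | 0 => 0
  | 1 => 1
  | (k'.+1 as k1).+1 => fib k1 + fib k'
  end.

(* [x] = sum_j x_j F_{l-j+2} for x = x_1 ... x_l (most significant first):
   the first letter of a word of length l has weight F_{l+1}. *)
Fixpoint fibval (x : seq bool) : nat :=
  match x with
  | [::] => 0
  | b :: x' => b * fib (size x').+2 + fibval x'
  end.

(* valid Fibonacci representation: no factor 11 (leading zeros allowed). *)
Fixpoint fib_valid (x : seq bool) : bool :=
  match x with
  | true :: ((true :: _) as _) => false
  | _ :: x' => fib_valid x'
  | [::] => true
  end.

Record DFAO (Delta : Type) := MkDFAO {
  dfao_state : finType;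
  dfao_delta : dfao_state -> bool -> option dfao_state;
  dfao_init  : dfao_state;
  dfao_out   : dfao_state -> Delta
}.

Fixpoint dfao_run (Delta : Type) (A : DFAO Delta) (q : dfao_state A)
    (x : seq bool) : option (dfao_state A) :=
  match x with
  | [::] => Some q
  | b :: x' => match dfao_delta q b with
               | Some q' => dfao_run q' x'
               | None => None
               end
  end.

(* A generates h: for every valid x, delta(q0,x) is defined and
   tau(delta(q0,x)) = h([x]).  (This forces output to be independent of
   leading zeros.) *)
Definition fib_generates (Delta : Type) (A : DFAO Delta) (h : nat -> Delta) : Prop :=
  forall x : seq bool, fib_valid x ->
    exists q, dfao_run (dfao_init A) x = Some q /\ dfao_out q = h (fibval x).

(* Write n [x y] + c = n [x 0^k] + (n [y] + c) with k = |y|, and note that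
   j |-> [w 0^j] satisfies the Fibonacci recurrence.  For valid x we choose a
   valid word P of length |x| + 1 and a shift s = O(log n) such that
   n [x 0^j] = [P 0^(s+j)] + E j for a Fibonacci-like sequence E whose two
   initial terms are O(n); bounding E 1 uses |[w 0] - phi [w]| < 1.  The valid
   words of length |P| + s + k extending P, resp. its successor P', represent
   two adjacent blocks of integers starting at [P 0^(s+k)], and n [x y] + c
   falls into one of them.  So h (n [x y] + c) depends only on y and on the
   states of A after P and P', their last letters, E 0 and E 1: O(m^2 n^2)
   values.  With the last letter of x, these data determine the right context
   of x, and choosing a representative word for each of them yields the DFAO. *)

From Stdlib Require Import Reals Lra Psatz ClassicalEpsilon.
From mathcomp Require Import all_boot zify.

Set Implicit Arguments.
Unset Strict Implicit.
Unset Printing Implicit Defensive.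

Definition fib_like (f : nat -> nat) := forall j, f j.+2 = f j.+1 + f j.

Lemma fib_like_leq f g : fib_like f -> fib_like g ->
  f 0 <= g 0 -> f 1 <= g 1 -> forall j, f j <= g j.
Proof.
move=> Hf Hg le0 le1.
suff H j : f j <= g j /\ f j.+1 <= g j.+1 by move=> j; case: (H j).
elim: j => [|j [IH1 IH2]] //; split=> //; rewrite Hf Hg; exact: leq_add.
Qed.

Lemma fib_like_eq f g : fib_like f -> fib_like g ->
  f 0 = g 0 -> f 1 = g 1 -> forall j, f j = g j.
Proof.
move=> Hf Hg eq0 eq1 j; apply/eqP; rewrite eqn_leq.
by rewrite (fib_like_leq Hf Hg) ?eq0 ?eq1 // (fib_like_leq Hg Hf) ?eq0 ?eq1.
Qed.

Lemma fib_likeD f g : fib_like f -> fib_like g -> fib_like (fun j => f j + g j).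
Proof. by move=> Hf Hg j; rewrite Hf Hg addnACA. Qed.

Lemma fib_likeMn n f : fib_like f -> fib_like (fun j => n * f j).
Proof. by move=> Hf j; rewrite Hf mulnDr. Qed.

Lemma fib_like_shift s f : fib_like f -> fib_like (fun j => f (s + j)).
Proof. by move=> Hf j; rewrite !addnS Hf. Qed.

Fixpoint fibseq (a b k : nat) : nat :=
  if k is k'.+1 then fibseq b (a + b) k' else a.

Lemma fibseq_fib_like a b : fib_like (fibseq a b).
Proof. by move=> k; elim: k a b => [|k IH] a b; [rewrite /= addnC | exact: IH]. Qed.

Lemma fibSS k : fib k.+2 = fib k.+1 + fib k. Proof. by []. Qed.

Lemma fib_fib_like : fib_like fib. Proof. exact: fibSS. Qed.

Lemma fib_leS k : fib k <= fib k.+1.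
Proof. by case: k => // k; rewrite fibSS leq_addr. Qed.

Lemma fib_gt0 k : 0 < fib k.+1.
Proof. by elim: k => // k IH; rewrite fibSS ltn_addr. Qed.

Lemma leq_fibS k : k <= fib k.+1.
Proof.
suff H : k <= fib k.+1 /\ k.+1 <= fib k.+2 by case: H.
elim: k => [|k [_ IH]] //; split=> //; rewrite fibSS; have := fib_gt0 k; lia.
Qed.

Lemma fibD a b : fib (a + b).+1 = fib a.+1 * fib b.+1 + fib a * fib b.
Proof.
pose g j := fib a.+1 * fib j.+1 + fib a * fib j.
have g_like : fib_like g.
  apply: fib_likeD; apply: fib_likeMn; last exact: fib_fib_like.
  exact: (fib_like_shift 1 fib_fib_like).
have f_like : fib_like (fun j => fib (a + j).+1) by move=> j; rewrite !addnS.
apply: (fib_like_eq f_like g_like); rewrite /g /= ?addn0 ?addn1 ?muln1 ?muln0 ?addn0 //.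
Qed.

Lemma fib_valid_cons b x : fib_valid (b :: x) = fib_valid x && ~~ (b && head false x).
Proof. by case: b; case: x => [|[] x] //=; rewrite ?andbT ?andbF. Qed.

Lemma fib_valid_cat w z :
  fib_valid (w ++ z) = fib_valid w && fib_valid (last false w :: z).
Proof.
elim: w => [|b w IH] //; rewrite cat_cons fib_valid_cons.
case: w IH => [|b' w] IH; first by rewrite cat0s [fib_valid (_ :: z)]fib_valid_cons; case: b.
by rewrite IH [fib_valid (b :: _)]fib_valid_cons andbAC.
Qed.

Lemma fib_valid_rcons w b : fib_valid (rcons w b) = fib_valid w && ~~ (last false w && b).
Proof. by rewrite -cats1 fib_valid_cat; case: b; case: (last false w). Qed.

Lemma fib_valid_cons_nseq b j : fib_valid (b :: nseq j false).
Proof. by rewrite fib_valid_cons andbC; case: j => [|j] /=; rewrite ?andbF //; elim: j. Qed.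

Lemma fib_valid_pad w j : fib_valid w -> fib_valid (w ++ nseq j false).
Proof. by move=> Vw; rewrite fib_valid_cat Vw fib_valid_cons_nseq. Qed.

Lemma fibval_nseq0 j : fibval (nseq j false) = 0.
Proof. by elim: j. Qed.

Lemma fibval_cons b w : fibval (b :: w) = b * fib (size w).+2 + fibval w.
Proof. by []. Qed.

Definition padval (w : seq bool) (j : nat) : nat := fibval (w ++ nseq j false).

Lemma padval0 w : padval w 0 = fibval w.
Proof. by rewrite /padval cats0. Qed.

Lemma padval1 w : padval w 1 = fibval (rcons w false).
Proof. by rewrite /padval cats1. Qed.

Lemma padval_pad w i j : padval (w ++ nseq i false) j = padval w (i + j).
Proof. by rewrite /padval -catA -nseqD. Qed.

Lemma padval_cons b w j : padval (b :: w) j = b * fib (size w + j).+2 + padval w j.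
Proof. by rewrite /padval cat_cons /= size_cat size_nseq. Qed.

Lemma fibval_cat w z : fibval (w ++ z) = padval w (size z) + fibval z.
Proof.
elim: w => [|b w IH]; first by rewrite /padval /= fibval_nseq0.
by rewrite cat_cons /= IH padval_cons size_cat addnA.
Qed.

Lemma padval_fib_like w : fib_like (padval w).
Proof.
elim: w => [|b w IH] j; first by rewrite /padval /= !fibval_nseq0.
by rewrite !padval_cons IH !addnS fibSS mulnDr addnACA.
Qed.

Lemma fibval_rcons w b : fibval (rcons w b) = padval w 1 + b.
Proof. by rewrite -cats1 fibval_cat /=; case: b. Qed.

Lemma padval1_rcons w b : padval (rcons w b) 1 = padval w 1 + fibval w + 2 * b.
Proof.
rewrite padval1 -!cats1 -catA fibval_cat padval_fib_like padval0 /=.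
by case: b; rewrite /= ?addn0; lia.
Qed.

Lemma padval_ge w j : fibval w * fib j.+1 <= padval w j.
Proof.
elim: w => [|b w IH]; first by rewrite mul0n.
rewrite fibval_cons padval_cons mulnDl -addSn fibD.
by apply: leq_add => //; case: b; rewrite ?mul0n // !mul1n leq_addr.
Qed.

Lemma padvalS_le w j : padval w j.+1 <= 2 * padval w j.
Proof.
elim: w => [|b w IH]; first by rewrite /padval /= !fibval_nseq0.
rewrite !padval_cons mulnDr addnS; apply: leq_add => //.
by case: b; rewrite ?mul0n // !mul1n fibSS; have := fib_leS (size w + j).+1; lia.
Qed.

(* [fib_bound b j] counts the valid words z of length j with [b :: z] valid;
   their values are exactly 0, ..., fib_bound b j - 1. *)
Definition fib_bound (b : bool) (j : nat) : nat := if b then fib j.+1 else fib j.+2.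

Lemma fib_bound_fib_like b : fib_like (fib_bound b).
Proof. by case: b. Qed.

Lemma fib_bound_ge b j : fib j.+1 <= fib_bound b j.
Proof. by case: b => //; apply: fib_leS. Qed.

Lemma fib_bound_le b j : fib_bound b j <= fib j.+2.
Proof. by case: b => //; apply: fib_leS. Qed.

Lemma fibval_lt_bound b w : fib_valid (b :: w) -> fibval w < fib_bound b (size w).
Proof.
elim: w b => [|b' w IH] b; first by case: b.
rewrite fib_valid_cons => /andP [/(IH b') lt nbb'].
rewrite fibval_cons; case: b' lt nbb' => lt nb.
- rewrite andbT in nb; rewrite (negbTE nb) mul1n.
  change (fib (size w).+2 + fibval w < fib (size w).+2 + fib (size w).+1).
  by rewrite ltn_add2l.
- change (fibval w < fib_bound b (size w).+1).
  by apply: (leq_trans lt); case: b {nb} => //; apply: fib_leS.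
Qed.

Lemma fibval_lt_fib w : fib_valid w -> fibval w < fib (size w).+2.
Proof. exact: (@fibval_lt_bound false). Qed.

Lemma fibval_cat_lt w z : fib_valid (w ++ z) -> fibval z < fib_bound (last false w) (size z).
Proof. by rewrite fib_valid_cat => /andP [_]; apply: fibval_lt_bound. Qed.

Fixpoint fibrep (b : bool) (M len : nat) : seq bool :=
  if len is l.+1 then
    if ~~ b && (fib l.+2 <= M) then true :: fibrep true (M - fib l.+2) l
    else false :: fibrep false M l
  else [::].

Lemma size_fibrep b M len : size (fibrep b M len) = len.
Proof. by elim: len b M => //= l IH b M; case: ifP => _ /=; rewrite IH. Qed.

Lemma fibrepS b M l : fibrep b M l.+1 =
  if ~~ b && (fib l.+2 <= M) then true :: fibrep true (M - fib l.+2) l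
  else false :: fibrep false M l.
Proof. by []. Qed.

Lemma fibrepP b M len : M < fib_bound b len ->
  fibval (fibrep b M len) = M /\ fib_valid (b :: fibrep b M len).
Proof.
elim: len b M => [|l IH] b M; first by case: b; case: M.
rewrite fibrepS; case: ifP => [/andP [/negbTE -> leM] | big] ltM.
- have ltM' : M - fib l.+2 < fib_bound true l by rewrite ltn_subLR // -fibSS.
  have [valM V] := IH true _ ltM'.
  by rewrite fibval_cons size_fibrep mul1n valM subnKC.
- have ltM' : M < fib_bound false l.
    by case: b big ltM => // /negbT; rewrite -ltnNge.
  have [valM V] := IH false M ltM'.
  by rewrite fibval_cons mul0n add0n valM fib_valid_cons V andbF.
Qed.

Lemma fibval_inj w w' : fib_valid w -> fib_valid w' -> size w = size w' ->
  fibval w = fibval w' -> w = w'.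
Proof.
elim: w w' => [|b u IH] [|b' u'] // Vw Vw' [Hs].
move: Vw Vw'; rewrite !fib_valid_cons => /andP [Vu _] /andP [Vu' _].
have := fibval_lt_fib Vu; have := fibval_lt_fib Vu'.
rewrite !fibval_cons -Hs; case: b; case: b'; rewrite ?mul1n ?mul0n ?add0n => lt' lt E.
- by rewrite (IH u') //; apply/eqP; rewrite -(eqn_add2l (fib (size u).+2)) E.
- by move: lt'; rewrite -E ltnNge leq_addr.
- by move: lt; rewrite E ltnNge leq_addr.
- by rewrite (IH u').
Qed.

Lemma padval_add_bound b u j : fib_valid (b :: u) ->
  padval u j + fib_bound (last b u) j <= fib_bound b (size u + j).
Proof.
move=> V; set c := last b u.
have pos : 0 < fib_bound c j by apply: leq_trans (fib_gt0 j) (fib_bound_ge c j).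
have pred_lt : (fib_bound c j).-1 < fib_bound c j by rewrite prednK.
have [valz Vz] := fibrepP pred_lt.
have Vuz : fib_valid (b :: u ++ fibrep c (fib_bound c j).-1 j).
  by rewrite -cat_cons fib_valid_cat V.
have := fibval_lt_bound Vuz.
by rewrite fibval_cat size_fibrep valz size_cat size_fibrep; lia.
Qed.

Lemma padval_gap w w' j : fib_valid w -> fib_valid w' -> size w = size w' ->
  fibval w < fibval w' -> padval w j + fib_bound (last false w) j <= padval w' j.
Proof.
elim: w w' => [|b u IH] [|b' u'] // Vw Vw' [Hs].
move: (Vw) Vw'; rewrite !fib_valid_cons => /andP [Vu _] /andP [Vu' _].
have tail : fibval u < fibval u' -> padval u j + fib_bound (last b u) j <= padval u' j.
  by case: u IH Vu Hs {Vw} => [|b0 u] IH Vu Hs; [case: u' Hs {Vu'} | exact: IH].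
have := fibval_lt_fib Vu'; rewrite !fibval_cons !padval_cons -Hs.
case: b b' Vw tail {IH} => [] [] Vw tail; rewrite ?mul1n ?mul0n ?add0n => lt' lt.
- by rewrite -addnA leq_add2l tail // -(ltn_add2l (fib (size u).+2)).
- by move: lt'; rewrite ltnNge (leq_trans (leq_addr _ _) (ltnW lt)).
- by rewrite (leq_trans (padval_add_bound j Vw)) ?leq_addr.
- exact: tail.
Qed.

Lemma padval_leq w w' j : fib_valid w -> fib_valid w' -> size w = size w' ->
  fibval w <= fibval w' -> padval w j <= padval w' j.
Proof.
move=> Vw Vw' Hs; rewrite leq_eqVlt => /orP [/eqP E | lt].
  by rewrite (fibval_inj Vw Vw' Hs E).
exact: leq_trans (leq_addr _ _) (padval_gap j Vw Vw' Hs lt).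
Qed.

Lemma fib_valid_take k w : fib_valid w -> fib_valid (take k w).
Proof. by rewrite -{1}(cat_take_drop k w) fib_valid_cat => /andP []. Qed.

Lemma fibval_take_bounds k w : fib_valid w ->
  padval (take k w) (size w - k) <= fibval w <
  padval (take k w) (size w - k) + fib_bound (last false (take k w)) (size w - k).
Proof.
move=> V; have := @fibval_cat_lt (take k w) (drop k w).
rewrite cat_take_drop size_drop => /(_ V) lt.
have -> : fibval w = padval (take k w) (size w - k) + fibval (drop k w).
  by rewrite -{1}(cat_take_drop k w) fibval_cat size_drop.
by rewrite leq_addr ltn_add2l.
Qed.

Lemma padval_succ P P' j : fib_valid P -> fib_valid P' -> size P = size P' ->
  fibval P' = (fibval P).+1 -> padval P' j = padval P j + fib_bound (last false P) j.
Proof.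
move=> VP VP' Hs E; apply/eqP; rewrite eqn_leq padval_gap ?E // andbT leqNgt.
apply/negP; set M := padval P j + _ => ltM.
have leM : padval P j <= M by apply: leq_addr.
have M_lt : M < fib_bound false (size P + j).
  have := fibval_lt_fib (fib_valid_pad j VP'); rewrite size_cat size_nseq -Hs.
  exact: ltn_trans ltM.
have [valW VW] := fibrepP M_lt; set W := fibrep _ _ _ in valW VW.
have sizeW : size W - size P = j by rewrite size_fibrep addKn.
have := fibval_take_bounds (size P) (VW : fib_valid W); rewrite sizeW valW.
set Q := take _ W; have VQ : fib_valid Q by apply: fib_valid_take.
have sizeQ : size Q = size P by rewrite size_takel // size_fibrep leq_addr.
case: (ltngtP (fibval Q) (fibval P)) => [lt | gt | eqQ].
- by have := padval_gap j VQ VP sizeQ lt; lia.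
- have le' : fibval P' <= fibval Q by rewrite E.
  by have := padval_leq j VP' VQ (etrans (esym Hs) (esym sizeQ)) le'; lia.
- by rewrite (fibval_inj VQ VP sizeQ eqQ) /M; lia.
Qed.



Lemma dfao_run_cat (Delta : Type) (A : DFAO Delta) (q : dfao_state A) x y :
  dfao_run q (x ++ y) = obind (fun q' => dfao_run q' y) (dfao_run q x).
Proof. by elim: x q => [|b x IH] q //=; case: (dfao_delta q b). Qed.

Definition reach (Delta : Type) (A : DFAO Delta) (w : seq bool) : dfao_state A :=
  odflt (dfao_init A) (dfao_run (dfao_init A) w).

Definition block_out (Delta : Type) (A : DFAO Delta) (r r' : dfao_state A)
    (b b' : bool) (j M : nat) : Delta :=
  let out q z := dfao_out (odflt q (dfao_run q z)) in
  if M < fib_bound b j then out r (fibrep b M j)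
  else out r' (fibrep b' (M - fib_bound b j) j).

Section Blocks.

Variables (Delta : Type) (h : nat -> Delta) (A : DFAO Delta).
Hypothesis A_gen : fib_generates A h.

Lemma fib_generates_cat P z : fib_valid (P ++ z) ->
  dfao_out (odflt (reach A P) (dfao_run (reach A P) z)) = h (fibval (P ++ z)).
Proof.
move=> V; have [q [runq <-]] := A_gen V.
have [r [runr _]] := A_gen (fib_valid_take (size P) V); rewrite take_size_cat // in runr.
by move: runq; rewrite dfao_run_cat runr /reach runr /= => ->.
Qed.

Lemma block_outP P P' j M : fib_valid P -> fib_valid P' -> size P = size P' ->
  fibval P' = (fibval P).+1 ->
  M < fib_bound (last false P) j + fib_bound (last false P') j ->
  block_out (reach A P) (reach A P') (last false P) (last false P') j M = h (padval P j + M).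
Proof.
move=> VP VP' Hs E ltM; rewrite /block_out; case: ifP => [lt | /negbT ge].
  have [valz Vz] := fibrepP lt.
  by rewrite fib_generates_cat ?fib_valid_cat ?VP // fibval_cat size_fibrep valz.
have lt' : M - fib_bound (last false P) j < fib_bound (last false P') j.
  by rewrite -leqNgt in ge; lia.
have [valz Vz] := fibrepP lt'.
rewrite fib_generates_cat ?fib_valid_cat ?VP' // fibval_cat size_fibrep valz.
by rewrite (padval_succ j VP VP' Hs E) -addnA subnKC // leqNgt.
Qed.

End Blocks.

Section GoldenRatio.

Local Open Scope R_scope.

Lemma INR_addn a b : INR (a + b)%N = INR a + INR b.
Proof. by rewrite -plusE plus_INR. Qed.

Lemma INR_muln a b : INR (a * b)%N = INR a * INR b.
Proof. by rewrite -multE mult_INR. Qed.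

Lemma ltn_INR a b : INR a < INR b -> (a < b)%N.
Proof. by move/INR_lt/ltP. Qed.

Definition phi : R := (1 + sqrt 5) / 2.

Lemma sqrt5_sq : sqrt 5 * sqrt 5 = 5.
Proof. by apply: sqrt_sqrt; lra. Qed.

Lemma phi_sq : phi * phi = phi + 1.
Proof. by rewrite /phi; have := sqrt5_sq; nra. Qed.

Lemma phi_bounds : 1.6 < phi < 1.62.
Proof. by rewrite /phi; have := sqrt5_sq; have := sqrt_pos 5; nra. Qed.

(* Appending b maps the error e = [w 0] - phi [w] to (1 - phi) e + (2 - phi) b,
   and b = 1 only follows a 0. *)
Lemma padval1_phi_err w : fib_valid w ->
  -1 < INR (padval w 1) - phi * INR (fibval w) < 1 /\
  (last false w = false -> 1 - phi < INR (padval w 1) - phi * INR (fibval w) < phi - 1).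
Proof.
have := phi_bounds; have := phi_sq.
elim/last_ind: w => [|u b IH] sq bnd; first by rewrite padval1 /=; lra.
rewrite fib_valid_rcons last_rcons => /andP [Vu nub].
have [[lo hi] last0] := IH sq bnd Vu.
rewrite padval1_rcons fibval_rcons.
set a := INR (fibval u) in lo hi last0 *; set a1 := INR (padval u 1) in lo hi last0 *.
have sq_a : phi * phi * a = phi * a + a by rewrite sq; ring.
case: b nub => [nu | _]; rewrite !INR_addn -/a -/a1 /=.
- have [lo' hi'] : 1 - phi < a1 - phi * a < phi - 1.
    by apply: last0; move: nu; rewrite andbT => /negbTE.
  have -> : a1 + a + (1 + 1) - phi * (a1 + 1) = (1 - phi) * (a1 - phi * a) + (2 - phi).
    by nra.
  by split=> //; nra.
- have -> : a1 + a + 0 - phi * (a1 + 0) = (1 - phi) * (a1 - phi * a) by nra.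
  by split=> [|_]; nra.
Qed.

Lemma padvalS_phi_err w j : fib_valid w ->
  -1 < INR (padval w j.+1) - phi * INR (padval w j) < 1.
Proof.
move/(fib_valid_pad j)/padval1_phi_err => [err _].
by rewrite -padval0 !padval_pad addn0 addn1 in err.
Qed.

Lemma fib_phi_err i : -1 <= INR (fib i.+1) - phi * INR (fib i) <= 1.
Proof.
have := phi_bounds; have := phi_sq.
elim: i => [|i IH] sq bnd; first by rewrite /=; lra.
have [lo hi] := IH sq bnd.
rewrite fibSS INR_addn.
have sq_a : phi * phi * INR (fib i) = phi * INR (fib i) + INR (fib i) by rewrite sq; ring.
have -> : INR (fib i.+1) + INR (fib i) - phi * INR (fib i.+1) =
          (1 - phi) * (INR (fib i.+1) - phi * INR (fib i)) by nra.
by split; nra.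
Qed.

Lemma fib_bound_phi b j : phi * INR (fib_bound b j) <= INR (fib_bound b j.+1) + 1.
Proof. by case: b; [have := fib_phi_err j.+1 | have := fib_phi_err j.+2]; rewrite /=; lra. Qed.

Lemma INR_leq a b : (a <= b)%N -> INR a <= INR b.
Proof. by move/leP/le_INR. Qed.

Lemma phi_rem_bounds (n u X1 g0 g1 b0 b1 : nat) : (0 < n)%N ->
  (g0 + n.+1 <= n * u <= g0 + n + b0)%N ->
  -1 < INR X1 - phi * INR u < 1 -> -1 < INR g1 - phi * INR g0 < 1 ->
  phi * INR b0 <= INR b1 + 1 ->
  (g1 < n * X1)%N /\ (n * X1 + 2 * n < g1 + b1 + 5 * n + 2)%N.
Proof.
move=> /ltP/lt_INR /= n_gt0 /andP [/INR_leq lo /INR_leq hi] [xlo xhi] [glo ghi] b_phi.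
move: lo hi; rewrite !INR_addn INR_muln S_INR => lo hi.
have [nlo nhi] : - INR n < INR n * (INR X1 - phi * INR u) < INR n by split; nra.
have := phi_bounds; have := pos_INR b0 => b0_ge0 bnd.
set E0 := INR n * INR u - INR g0 in lo hi.
set e := INR n * INR X1 - INR g1.
have err : - (INR n + 1) < e - phi * E0 < INR n + 1 by rewrite /e /E0; split; nra.
split; apply: ltn_INR; rewrite ?INR_addn !INR_muln /=.
- suff : 0 < e by rewrite /e; lra.
  by rewrite /E0 in err; nra.
- suff : e + 2 * INR n < INR b1 + 5 * INR n + 2 by rewrite /e; lra.
  by rewrite /E0 in err; nra.
Qed.

End GoldenRatio.

Section Anchor.

Variable n : nat.
Hypothesis n_gt0 : 0 < n.

(* For j = 0, 1, [fibseq rem0 rem1 j + n * fib j.+2] exceeds the anchor's block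
   by at most 5 n + 2, which the block of its successor, of size at least
   fib shift.+1, must absorb. *)
Lemma shift_ex : exists j, 5 * n + 2 <= fib j.+1.
Proof. by exists (5 * n + 2); apply: leq_fibS. Qed.

Definition shift : nat := ex_minn shift_ex.

Lemma shift_bounds : 5 * n + 2 <= fib shift.+1 /\ fib shift.+3 <= 25 * n + 5.
Proof.
rewrite /shift; case: ex_minnP => [[|m] le_m min_m]; first by move: le_m => /=; lia.
split=> //; have lt_m : fib m.+1 < 5 * n + 2 by rewrite ltnNge; apply/negP => /min_m; lia.
by have := fib_leS m; rewrite !fibSS in le_m *; lia.
Qed.

Variable x : seq bool.
Hypothesis x_valid : fib_valid x.

Local Notation u := (fibval x).
Local Notation L := (size x).+1.
(* The slack n + 1 gives rem0 >= n + 1, which keeps rem1, equal to phi rem0 up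
   to n + 1, positive. *)
Local Notation target := (n * u - n.+1).

Definition anchor : seq bool := take L (fibrep false target (L + shift)).

Definition anchor_succ : seq bool := fibrep false (fibval anchor).+1 L.

Definition rem0 : nat := n * u - padval anchor shift.

Definition rem1 : nat := n * padval x 1 - padval anchor shift.+1.

Lemma mul_fibval_lt : n * u < fib shift.+1 * fib L.+1.
Proof.
have [shift_lo _] := shift_bounds.
rewrite (@leq_trans (n * fib L.+1)) ?ltn_pmul2l ?fibval_lt_fib //.
by apply: leq_mul => //; lia.
Qed.

Lemma anchorP : [/\ fib_valid anchor, size anchor = L, padval anchor shift <= target &
  target < padval anchor shift + fib_bound (last false anchor) shift].
Proof.
have target_lt : target < fib_bound false (L + shift).
  change (target < fib (L + shift).+2).
  have -> : (L + shift).+2 = (shift.+1 + L).+1 by lia.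
  rewrite fibD.
  apply: (leq_ltn_trans (leq_subr _ _)); apply: (leq_trans mul_fibval_lt).
  by rewrite (leq_trans _ (leq_addr _ _)) // leq_mul2r fib_leS orbT.
have [valW VW] := fibrepP target_lt; set W := fibrep _ _ _ in valW VW.
have sizeW : size W - L = shift by rewrite size_fibrep addKn.
have := fibval_take_bounds L (VW : fib_valid W); rewrite sizeW valW => /andP [lo hi].
split=> //; first exact: fib_valid_take.
by rewrite size_takel // size_fibrep leq_addr.
Qed.

Lemma anchor_succP : [/\ fib_valid anchor_succ, size anchor_succ = L &
  fibval anchor_succ = (fibval anchor).+1].
Proof.
have [_ _ le_target _] := anchorP.
have anchor_lt : fibval anchor < fib L.+1.
  rewrite -(ltn_pmul2l (fib_gt0 shift)) mulnC (leq_ltn_trans (padval_ge _ _)) //.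
  by rewrite (leq_ltn_trans le_target) // (leq_ltn_trans (leq_subr _ _)) // mul_fibval_lt.
have succ_lt : (fibval anchor).+1 < fib_bound false L.
  by change ((fibval anchor).+1 < fib L.+2); rewrite fibSS; have := fib_gt0 (size x); lia.
have [valS VS] := fibrepP succ_lt.
by split; rewrite ?size_fibrep.
Qed.

Lemma rem0_bound : padval anchor shift <= n * u /\
  rem0 <= n + fib_bound (last false anchor) shift.
Proof. by have [_ _ lo hi] := anchorP; rewrite /rem0; lia. Qed.

Lemma rem1_bound : padval anchor shift.+1 <= n * padval x 1 /\
  rem1 + 2 * n <= fib_bound (last false anchor) shift.+1 + 5 * n + 2.
Proof.
have [VP _ lo hi] := anchorP; rewrite /rem1.
case: (leqP n.+1 (n * u)) => [big | small].
  have window : padval anchor shift + n.+1 <= n * u <=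
                padval anchor shift + n + fib_bound (last false anchor) shift.
    by apply/andP; split; lia.
  have := padvalS_phi_err 0 x_valid; rewrite padval0 => err_x.
  have [g1_lt ub] := phi_rem_bounds n_gt0 window err_x (padvalS_phi_err shift VP)
                       (fib_bound_phi _ _).
  by split; lia.
(* Here the anchor block starts at 0 and [x] <= 1. *)
have := padvalS_le anchor shift; have := padvalS_le x 0; rewrite padval0.
have u_le1 : u <= 1 by nia.
nia.
Qed.

Lemma muln_padval_anchor j : n * padval x j = padval anchor (shift + j) + fibseq rem0 rem1 j.
Proof.
have [le0 _] := rem0_bound; have [le1 _] := rem1_bound.
pose g j := padval anchor (shift + j) + fibseq rem0 rem1 j.
have g_like : fib_like g.
  exact: fib_likeD (fib_like_shift _ (padval_fib_like _)) (fibseq_fib_like _ _).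
apply: (fib_like_eq (fib_likeMn _ (padval_fib_like x)) g_like); rewrite /g /=.
- by rewrite padval0 addn0 /rem0 subnKC.
- by rewrite addn1 /rem1 subnKC.
Qed.

Lemma fibseq_rem_bound j : fibseq rem0 rem1 j + n * fib j.+2 <=
  fib_bound (last false anchor) (shift + j) + fib_bound (last false anchor_succ) (shift + j).
Proof.
have [shift_lo _] := shift_bounds.
have [_ ub0] := rem0_bound; have [_ ub1] := rem1_bound.
have := fib_bound_ge (last false anchor_succ) shift.
have := fib_bound_ge (last false anchor_succ) shift.+1; have := fib_leS shift.+1.
move=> fib_le lb1 lb0.
pose f j := fibseq rem0 rem1 j + n * fib j.+2.
have f_like : fib_like f.
  exact: fib_likeD (fibseq_fib_like _ _) (fib_likeMn _ (fib_like_shift 2 fib_fib_like)).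
pose g j := fib_bound (last false anchor) (shift + j) +
            fib_bound (last false anchor_succ) (shift + j).
have g_like : fib_like g.
  by apply: fib_likeD; apply: fib_like_shift; apply: fib_bound_fib_like.
apply: (fib_like_leq f_like g_like); rewrite /f /g /=.
- by rewrite !addn0; lia.
- by rewrite !addn0 !addn1; lia.
Qed.

Lemma rem_le : rem0 <= 35 * n /\ rem1 <= 35 * n.
Proof.
have [_ shift_hi] := shift_bounds.
have [_ ub0] := rem0_bound; have [_ ub1] := rem1_bound.
have := fib_bound_le (last false anchor) shift.+1.
have := fib_bound_le (last false anchor) shift; have := fib_leS shift.+2.
by split; lia.
Qed.

End Anchor.

Section RightContexts.

Variables (Delta : Type) (f : nat -> Delta) (S : finType).
Variables (desc : seq bool -> S) (future : S -> seq bool -> Delta).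
Hypothesis futureP : forall x y, fib_valid (x ++ y) -> f (fibval (x ++ y)) = future (desc x) y.

Definition nerode (x1 x2 : seq bool) : Prop := forall y,
  fib_valid (x1 ++ y) = fib_valid (x2 ++ y) /\
  (fib_valid (x1 ++ y) -> f (fibval (x1 ++ y)) = f (fibval (x2 ++ y))).

Lemma nerode_trans x1 x2 x3 : nerode x1 x2 -> nerode x2 x3 -> nerode x1 x3.
Proof.
move=> N12 N23 y; have [V12 F12] := N12 y; have [V23 F23] := N23 y.
by split=> [|V]; [rewrite V12 | rewrite F12 // F23 -?V12].
Qed.

Lemma nerode_rcons x1 x2 b : nerode x1 x2 -> nerode (rcons x1 b) (rcons x2 b).
Proof. by move=> N y; rewrite -!cats1 -!catA; apply: N. Qed.

Definition context (x : seq bool) : bool * S := (last false x, desc x).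

Lemma nerode_context x1 x2 : fib_valid x1 -> fib_valid x2 ->
  context x1 = context x2 -> nerode x1 x2.
Proof.
move=> V1 V2 [last_eq desc_eq] y.
have V : fib_valid (x1 ++ y) = fib_valid (x2 ++ y) by rewrite !fib_valid_cat V1 V2 last_eq.
by split=> // Vy; rewrite !futureP -?V // desc_eq.
Qed.

Definition context_rep (d : bool * S) : seq bool :=
  epsilon (inhabits [::]) (fun x => fib_valid x /\ context x = d).

Lemma context_repP x : fib_valid x ->
  fib_valid (context_rep (context x)) /\ context (context_rep (context x)) = context x.
Proof.
move=> V; apply: (epsilon_spec _ (fun x' => fib_valid x' /\ context x' = context x)).
by exists x.
Qed.

Lemma nerode_context_rep x : fib_valid x -> nerode (context_rep (context x)) x.
Proof. by move=> V; have [Vr Er] := context_repP V; apply: nerode_context. Qed.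

Definition context_step (d : bool * S) (b : bool) : option (bool * S) :=
  let x := rcons (context_rep d) b in if fib_valid x then Some (context x) else None.

Definition context_dfao : DFAO Delta :=
  MkDFAO context_step (context [::]) (fun d => future d.2 [::]).

Lemma context_dfao_run x : fib_valid x -> exists2 x', fib_valid x' &
  dfao_run (dfao_init context_dfao) x = Some (context x') /\ nerode x' x.
Proof.
elim/last_ind: x => [|u b IH]; first by exists [::].
rewrite fib_valid_rcons => /andP [Vu ub]; have [x' Vx' [run_u Nx'u]] := IH Vu.
have Nru := nerode_trans (nerode_context_rep Vx') Nx'u.
have Vrb : fib_valid (rcons (context_rep (context x')) b).
  by have [V _] := Nru [:: b]; rewrite !cats1 in V; rewrite V fib_valid_rcons Vu.
exists (rcons (context_rep (context x')) b) => //.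
rewrite -cats1 dfao_run_cat run_u /= /context_step Vrb cats1; split=> //.
exact: nerode_rcons.
Qed.

Lemma context_dfao_generates : fib_generates context_dfao f.
Proof.
move=> x V; have [x' Vx' [run_x Nx'x]] := context_dfao_run V.
exists (context x'); split=> //=.
have [Veq Feq] := Nx'x [::]; rewrite !cats0 in Veq Feq.
by rewrite -Feq // -[x']cats0 futureP ?cats0.
Qed.

End RightContexts.

Section Subsequence.

Variables (n : nat) (Delta : Type) (A : DFAO Delta).
Hypothesis n_gt0 : 0 < n.

Definition descriptor : finType :=
  (dfao_state A * dfao_state A * bool * bool * 'I_(35 * n).+1 * 'I_(35 * n).+1)%type.

Lemma card_descriptor : #|descriptor| <= 4 * 36 ^ 2 * #|dfao_state A| ^ 2 * n ^ 2.
Proof.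
rewrite !card_prod card_bool !card_ord.
have le36 : (35 * n).+1 <= 36 * n by lia.
have := leq_mul le36 le36; nia.
Qed.

Definition desc (x : seq bool) : descriptor :=
  (reach A (anchor n x), reach A (anchor_succ n x),
   last false (anchor n x), last false (anchor_succ n x),
   inord (rem0 n x), inord (rem1 n x)).

Variables (c : nat) (h : nat -> Delta).
Hypotheses (c_lt_n : c < n) (A_gen : fib_generates A h).

Definition future (d : descriptor) (y : seq bool) : Delta :=
  let: (r, r', b, b', e0, e1) := d in
  block_out r r' b b' (shift n + size y) (fibseq e0 e1 (size y) + n * fibval y + c).

Lemma futureP x y : fib_valid (x ++ y) -> h (n * fibval (x ++ y) + c) = future (desc x) y.
Proof.
move=> Vxy; have Vx : fib_valid x by move: Vxy; rewrite fib_valid_cat => /andP [].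
have [le0 le1] := rem_le n_gt0 Vx.
have [VP sizeP _ _] := anchorP n_gt0 Vx.
have [VP' sizeP' succP] := anchor_succP n_gt0 Vx.
rewrite /future /desc !inordK ?ltnS //.
set M := fibseq _ _ _ + _ + c.
have -> : n * fibval (x ++ y) + c = padval (anchor n x) (shift n + size y) + M.
  by rewrite fibval_cat mulnDr muln_padval_anchor // /M; lia.
rewrite (block_outP A_gen) ?sizeP ?sizeP' //.
have y_lt : fibval y < fib (size y).+2.
  exact: leq_trans (fibval_cat_lt Vxy) (fib_bound_le _ _).
have := fibseq_rem_bound n_gt0 Vx (size y).
have : n * (fibval y).+1 <= n * fib (size y).+2 by rewrite leq_mul2l y_lt orbT.
by rewrite /M; lia.
Qed.

End Subsequence.

Theorem theorem17 :
  exists K : nat,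
    forall (n c : nat), 1 <= n -> c < n ->
    forall (Delta : Type) (h : nat -> Delta) (A : DFAO Delta),
      fib_generates A h ->
      exists B : DFAO Delta,
        #|dfao_state B| <= K * #|dfao_state A| ^ 2 * n ^ 4 /\
        fib_generates B (fun i => h (n * i + c)).
Proof.
exists (8 * 36 ^ 2) => n c n_gt0 c_lt_n Delta h A A_gen.
exists (context_dfao (desc n A) (@future n Delta A c)); split.
  rewrite /= card_prod card_bool; have := card_descriptor A n_gt0.
  have : n ^ 2 <= n ^ 4 by rewrite leq_pexp2l.
  move: (n ^ 2) (n ^ 4) (#|dfao_state A| ^ 2) => p q m2; nia.
by apply: context_dfao_generates => x y; apply: futureP.
Qed.
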